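(* For any sequence of instances $\{\mathcal{I}_N\}_{N\ge1}$ of the binary voting game there exists a sequence of regular strategy profiles $\{\Sigma'_N\}_{N\ge1}$ ($\Sigma'_N$ a profile in $\mathcal{I}_N$) such that $\lim_{N\to\infty}A(\Sigma'_N)=1$.
   Context: Binary voting game. An instance has $N$ agents each voting for $\mathbf{A}$ or $\mathbf{R}$. Unobserved world state $W\in\{L,H\}$ with common prior $P_L,P_H>0$. Conditional on $W$, each agent independently receives a signal $S_n\in\{l,h\}$ with $P_{sw}=\Pr[S_n=s\mid W=w]$, $P_{hH}>P_{hL}$, $P_{lH}<P_{lL}$. With threshold $\mu\in(0,1)$, $\mathbf{A}$ wins iff at least $\mu N$ agents vote $\mathbf{A}$, else $\mathbf{R}$ wins. Agent $n$ has utility $v_n:\{L,H\}\times\{\mathbf{A},\mathbf{R}\}\to\{0,\dots,B\}$ with $v_n(H,\mathbf{A})>v_n(L,\mathbf{A})$, $v_n(H,\mathbf{R})<v_n(L,\mathbf{R})$. Every agent is friendly ($v_n(H,\mathbf{A})>v_n(L,\mathbf{A})>v_n(L,\mathbf{R})>v_n(H,\mathbf{R})$), unfriendly ($v_n(L,\mathbf{R})>v_n(H,\mathbf{R})>v_n(H,\mathbf{A})>v_n(L,\mathbf{A})$), or contingent ($v_n(H,\mathbf{A})>v_n(H,\mathbf{R})$, $v_n(L,\mathbf{R})>v_n(L,\mathbf{A})$). Fixed constants $\alpha_F,\alpha_U,\alpha_C\ge0$ summing to $1$: $N_F=\lfloor\alpha_F N\rfloor$ friendly, $N_U=\lfloor\alpha_U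 N\rfloor$ unfriendly, $N_C=N-N_F-N_U$ contingent agents. Standing assumption: $\alpha_F<\mu$ and $\alpha_U<1-\mu$ (neither predetermined group can dominate), so the informed majority decision is $\mathbf{A}$ in $H$ and $\mathbf{R}$ in $L$. A sequence of instances $\{\mathcal{I}_N\}$: $\mathcal{I}_N$ has $N$ agents; all share $\mu$, prior, signal distributions and $\alpha$'s; utilities arbitrary. Strategy $\sigma=(\beta_l,\beta_h)$ with $\beta_s$ = probability of voting $\mathbf{A}$ on signal $s$. A profile is regular if friendly agents always vote $\mathbf{A}$ and unfriendly agents always vote $\mathbf{R}$. Fidelity: $A(\Sigma)=P_L\lambda^{\mathbf{R}}_L(\Sigma)+P_H\lambda^{\mathbf{A}}_H(\Sigma)$, where $\lambda^{\mathbf{X}}_w(\Sigma)$ is the ex-ante probability that $\mathbf{X}$ wins in state $w$. *)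

From HB Require Import structures.
From mathcomp Require Import all_boot all_order all_algebra.
From mathcomp Require Import boolp classical_sets reals topology normedtype sequences.
Set Implicit Arguments. Unset Strict Implicit. Unset Printing Implicit Defensive.
Import Order.TTheory GRing.Theory Num.Theory.
Local Open Scope ring_scope.

Inductive state := L | H.
Inductive outcome := OA | OR.   (* OA = alternative A, OR = alternative R *)

Definition utility := state -> outcome -> nat.

Definition friendly (v : utility) : bool :=
  [&& (v L OA < v H OA)%N, (v L OR < v L OA)%N & (v H OR < v L OR)%N].
Definition unfriendly (v : utility) : bool :=
  [&& (v H OR < v L OR)%N, (v H OA < v H OR)%N & (v L OA < v H OA)%N].
Definition contingent (v : utility) : bool :=
  (v H OR < v H OA)%N && (v L OA < v L OR)%N.

Definition admissible_utility (B : nat) (v : utility) : Prop :=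
  (forall w o, (v w o <= B)%N) /\
  (v L OA < v H OA)%N /\ (v H OR < v L OR)%N /\
  [|| friendly v, unfriendly v | contingent v].

Definition valid_instance {R : realType} (aF aU : R) (B N : nat)
    (v : 'I_N -> utility) : Prop :=
  (forall n, admissible_utility B (v n)) /\
  (#|[set n | friendly (v n)]|%:Z = Num.floor (aF * N%:R)) /\
  (#|[set n | unfriendly (v n)]|%:Z = Num.floor (aU * N%:R)).

(* strategy profile: sigma n = (beta_l, beta_h) of agent n *)
Definition profile {R : realType} (N : nat) (sigma : 'I_N -> R * R) : Prop :=
  forall n, 0 <= (sigma n).1 <= 1 /\ 0 <= (sigma n).2 <= 1.

Definition regular {R : realType} (N : nat) (v : 'I_N -> utility)
    (sigma : 'I_N -> R * R) : Prop :=
  forall n, (friendly (v n) -> sigma n = (1, 1)) /\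
            (unfriendly (v n) -> sigma n = (0, 0)).

(* Pr[S_n = h | W = w] *)
Definition phigh {R : realType} (phL phH : R) (w : state) : R :=
  match w with L => phL | H => phH end.

Definition pvoteA {R : realType} (phL phH : R) (N : nat)
    (sigma : 'I_N -> R * R) (w : state) (n : 'I_N) : R :=
  (1 - phigh phL phH w) * (sigma n).1 + phigh phL phH w * (sigma n).2.

Definition pset {R : realType} (phL phH : R) (N : nat)
    (sigma : 'I_N -> R * R) (w : state) (S : {set 'I_N}) : R :=
  \prod_(n in S) pvoteA phL phH sigma w n *
  \prod_(n in ~: S) (1 - pvoteA phL phH sigma w n).

Definition lambda {R : realType} (mu phL phH : R) (N : nat)
    (sigma : 'I_N -> R * R) (o : outcome) (w : state) : R :=
  match o with
  | OA => \sum_(S : {set 'I_N} | mu * N%:R <= #|S|%:R) pset phL phH sigma w S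
  | OR => \sum_(S : {set 'I_N} | #|S|%:R < mu * N%:R) pset phL phH sigma w S
  end.

Definition fidelity {R : realType} (mu PL PH phL phH : R) (N : nat)
    (sigma : 'I_N -> R * R) : R :=
  PL * lambda mu phL phH sigma OR L + PH * lambda mu phL phH sigma OA H.

From HB Require Import structures.
From mathcomp Require Import all_boot all_order all_algebra.
From mathcomp Require Import boolp classical_sets reals topology normedtype sequences.
From mathcomp Require Import ring lra zify.
Import Order.TTheory GRing.Theory Num.Theory numFieldNormedType.Exports.
Local Open Scope ring_scope.
Set Implicit Arguments. Unset Strict Implicit. Unset Printing Implicit Defensive.

(* Friendly agents always vote A and unfriendly agents always vote R; every
   contingent agent votes A with probability t - m d after signal l and
   t + (1 - m) d after signal h, where t = (mu - aF) / (1 - aF - aU) is the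
   contingent A-share that exactly meets the threshold, m = (phL + phH) / 2 and
   d = t (1 - t).  A contingent agent then votes A with probability
   t + (phigh w - m) d in state w, so the expected A-share is a fixed margin
   above mu in state H and below mu in state L.  The number of A-votes is a sum
   of N independent Bernoulli variables, of variance at most N, so by
   Chebyshev's inequality the wrong alternative wins with probability O(1/N) in
   each state, and the fidelity tends to 1. *)

Section BernoulliSet.
Variables (R : comPzRingType) (N : nat) (p : 'I_N -> R).

Definition bernoulli_set (S : {set 'I_N}) : R :=
  \prod_(i in S) p i * \prod_(i in ~: S) (1 - p i).

Lemma bernoulli_setE S :
  bernoulli_set S = \prod_i (if i \in S then p i else 1 - p i).
Proof.
rewrite /bernoulli_set [RHS](bigID (mem S)) /=; congr (_ * _).
  by apply: eq_bigr => i ->.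
by apply: eq_big => [i|i]; rewrite ?inE // => /negbTE ->.
Qed.

Lemma sum_bernoulli_set_prod (g : 'I_N -> bool -> R) :
  \sum_S bernoulli_set S * \prod_i g i (i \in S) =
  \prod_i (p i * g i true + (1 - p i) * g i false).
Proof.
rewrite bigA_distr; apply: eq_big => [S|S _]; first by rewrite inE.
by rewrite bernoulli_setE -big_split; apply: eq_bigr => i _; case: (i \in S).
Qed.

Lemma sum_bernoulli_set : \sum_S bernoulli_set S = 1.
Proof.
transitivity (\prod_(i < N) (p i * 1 + (1 - p i) * 1)).
  rewrite -(sum_bernoulli_set_prod (fun _ _ => 1)).
  by apply: eq_bigr => S _; rewrite big1_eq mulr1.
by rewrite big1 // => i _; rewrite !mulr1 subrKC.
Qed.

Lemma bernoulli_set_cov i j :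
  \sum_S bernoulli_set S * (((i \in S)%:R - p i) * ((j \in S)%:R - p j)) =
  if i == j then p i * (1 - p i) else 0.
Proof.
pose g k (b : bool) :=
  (if k == i then b%:R - p i else 1) * (if k == j then b%:R - p j else 1).
transitivity (\sum_S bernoulli_set S * \prod_k g k (k \in S)).
  apply: eq_bigr => S _; congr (_ * _).
  by rewrite big_split /= -!big_mkcond !big_pred1_eq.
rewrite sum_bernoulli_set_prod (bigD1 i) //= /g eqxx.
case: eqP => [<-|/eqP nij].
  by rewrite big1 => [|k /negbTE ->]; rewrite /=; ring.
by rewrite /= [X in X * _](_ : _ = 0) ?mul0r //; ring.
Qed.

Lemma bernoulli_set_var :
  \sum_S bernoulli_set S * (#|S|%:R - \sum_i p i) ^+ 2 = \sum_i p i * (1 - p i).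
Proof.
have cardE (S : {set 'I_N}) :
    #|S|%:R - \sum_i p i = \sum_i ((i \in S)%:R - p i).
  rewrite sumrB -sum1_card natr_sum big_mkcond; congr (_ - _).
  by apply: eq_bigr => i _; case: (i \in S).
transitivity (\sum_S \sum_i \sum_j
  bernoulli_set S * (((i \in S)%:R - p i) * ((j \in S)%:R - p j))).
  apply: eq_bigr => S _; rewrite cardE expr2 mulr_suml mulr_sumr.
  by apply: eq_bigr => i _; rewrite mulr_sumr mulr_sumr.
rewrite exchange_big; apply: eq_bigr => i _; rewrite exchange_big /=.
under eq_bigr do rewrite bernoulli_set_cov.
by rewrite -big_mkcond /= (big_pred1 i) // => j; rewrite eq_sym.
Qed.
End BernoulliSet.

Section Concentration.
Local Open Scope classical_set_scope.
Variable R : realType.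
Implicit Types c g : R.

Lemma bernoulli_set_ge0 N (p : 'I_N -> R) S :
  (forall i, 0 <= p i <= 1) -> 0 <= bernoulli_set p S.
Proof.
move=> p01; rewrite bernoulli_setE; apply: prodr_ge0 => i _.
by have /andP[? ?] := p01 i; case: (i \in S); lra.
Qed.

Lemma bernoulli_set_chebyshev N (p : 'I_N -> R) (bad : pred {set 'I_N}) g :
  (forall i, 0 <= p i <= 1) ->
  (forall S, bad S -> g ^+ 2 <= (#|S|%:R - \sum_i p i) ^+ 2) ->
  g ^+ 2 * \sum_(S | bad S) bernoulli_set p S <= N%:R.
Proof.
move=> p01 gbad; rewrite mulr_sumr.
pose var := \sum_S bernoulli_set p S * (#|S|%:R - \sum_i p i) ^+ 2.
apply: (@le_trans _ _ var).
  rewrite [leRHS](bigID bad) /= -[leLHS]addr0 lerD //.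
    apply: ler_sum => S /gbad; rewrite mulrC; apply: ler_wpM2l.
    exact: bernoulli_set_ge0.
  apply: sumr_ge0 => S _; apply: mulr_ge0; last exact: sqr_ge0.
  exact: bernoulli_set_ge0.
have -> : N%:R = \sum_(i < N) 1 :> R by rewrite sumr_const card_ord.
rewrite /var bernoulli_set_var.
by apply: ler_sum => i _; have /andP[? ?] := p01 i; nra.
Qed.

Lemma cvg0_chebyshev_bound c (Q : nat -> R) : 0 < c -> (forall N, 0 <= Q N) ->
  (forall N, 0 <= c * N%:R - 1 -> (c * N%:R - 1) ^+ 2 * Q N <= N%:R) ->
  Q @ \oo --> 0.
Proof.
move=> c0 Q0 cheb.
(* once [c N >= 2], [Q N <= 4 / (c^2 N) <= 8 / (c^2 (N + 1))] *)
apply: (@squeeze_cvgr _ _ _ _ (fun=> 0) (fun N => 8 / c ^+ 2 * harmonic N)).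
- near=> N.
  have cN2 : 2 <= c * N%:R.
    by rewrite -ler_pdivrMl //; near: N; exact: nbhs_infty_ger.
  have N1 : 1 <= N%:R :> R.
    have : 0 < N%:R :> R by nra.
    by rewrite ltr0n ler1n.
  have QN0 := Q0 N.
  have hb : (c * N%:R - 1) ^+ 2 * Q N <= N%:R by apply: cheb; lra.
  have hsq : (c * N%:R) ^+ 2 <= 4 * (c * N%:R - 1) ^+ 2.
    by rewrite !expr2; nra.
  have hcNQ : c ^+ 2 * N%:R * Q N <= 4.
    rewrite -(ler_pM2r (lt_le_trans ltr01 N1)); rewrite !expr2 in hsq hb *; nra.
  rewrite QN0 /= !ler_pdivlMr ?ltr0Sn ?exprn_gt0 //.
  rewrite -addn1 natrD; rewrite !expr2 in hcNQ *; nra.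
- exact: cvg_cst.
- rewrite -(mulr0 (8 / c ^+ 2)); exact: (cvgM (cvg_cst _) cvg_harmonic).
Unshelve. all: by end_near.
Qed.

Lemma bernoulli_set_lt_cvg0 c (p : forall N, 'I_N -> R) (x : nat -> R) :
  0 < c -> (forall N i, 0 <= p N i <= 1) ->
  (forall N, x N + (c * N%:R - 1) <= \sum_i p N i) ->
  (fun N => \sum_(S : {set 'I_N} | #|S|%:R < x N) bernoulli_set (p N) S)
    @ \oo --> 0.
Proof.
move=> c0 p01 mean_ge; apply: (cvg0_chebyshev_bound c0) => [N|N g0].
  by apply: sumr_ge0 => S _; exact: bernoulli_set_ge0.
apply: bernoulli_set_chebyshev => // S /= ltSx.
by have := mean_ge N; rewrite !expr2; nra.
Qed.

Lemma bernoulli_set_ge_cvg0 c (p : forall N, 'I_N -> R) (x : nat -> R) :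
  0 < c -> (forall N i, 0 <= p N i <= 1) ->
  (forall N, \sum_i p N i + (c * N%:R - 1) <= x N) ->
  (fun N => \sum_(S : {set 'I_N} | x N <= #|S|%:R) bernoulli_set (p N) S)
    @ \oo --> 0.
Proof.
move=> c0 p01 mean_le; apply: (cvg0_chebyshev_bound c0) => [N|N g0].
  by apply: sumr_ge0 => S _; exact: bernoulli_set_ge0.
apply: bernoulli_set_chebyshev => // S /= xleS.
by have := mean_le N; rewrite !expr2; nra.
Qed.

End Concentration.

Lemma separating_strategy (R : realFieldType) (phL phH t : R) :
  0 <= phL -> phL < phH -> phH <= 1 -> 0 < t < 1 ->
  exists bl bh : R, [/\ 0 <= bl <= 1, 0 <= bh <= 1,
    (1 - phL) * bl + phL * bh < t & t < (1 - phH) * bl + phH * bh].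
Proof.
move=> phL0 ltLH phH1 /andP[t0 t1].
pose m := (phL + phH) / 2; pose d := t * (1 - t).
have [m0 m1] : 0 <= m /\ m <= 1 by rewrite /m; split; lra.
have [d0 dt dt'] : [/\ 0 < d, d <= t & d <= 1 - t] by rewrite /d; split; nra.
exists (t - m * d), (t + (1 - m) * d).
have voteE ph :
  (1 - ph) * (t - m * d) + ph * (t + (1 - m) * d) = t + (ph - m) * d by ring.
rewrite !voteE; split; try (apply/andP; split); try nra.
- by rewrite gtrDl pmulr_llt0 // subr_lt0 /m; lra.
- by rewrite ltrDl pmulr_lgt0 // subr_gt0 /m; lra.
Qed.

Lemma floor_natr_bounds (R : realType) (x : R) (n : nat) :
  n%:Z = Num.floor x -> x - 1 < n%:R <= x.
Proof.
move=> nE; have := floor_itv x; rewrite -nE intrD /= => /andP[nx xn1].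
by apply/andP; split; [rewrite ltrBlDr | ].
Qed.

Lemma convex_comb01 (R : realDomainType) (q a b : R) :
  0 <= q <= 1 -> 0 <= a <= 1 -> 0 <= b <= 1 -> 0 <= (1 - q) * a + q * b <= 1.
Proof. by move=> /andP[? ?] /andP[? ?] /andP[? ?]; apply/andP; split; nra. Qed.

Lemma friendly_unfriendlyF (u : utility) : friendly u -> unfriendly u = false.
Proof. by case/and3P=> *; apply/negbTE/and3P; case=> *; lia. Qed.

Section RegularProfile.
Variables (R : realType) (phL phH bl bh : R) (N : nat) (v : 'I_N -> utility).

Definition regular_profile (n : 'I_N) : R * R :=
  if friendly (v n) then (1, 1)
  else if unfriendly (v n) then (0, 0) else (bl, bh).

Lemma regular_profileP : 0 <= bl <= 1 -> 0 <= bh <= 1 ->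
  profile regular_profile /\ regular v regular_profile.
Proof.
move=> bl01 bh01; split => n; rewrite /regular_profile.
  by case: ifP => _; [|case: ifP => _]; rewrite /= ?bl01 ?bh01 ?ler01 ?lexx.
split => [-> // | unfr].
by case: ifP => [/friendly_unfriendlyF|_]; rewrite unfr.
Qed.

Definition contingent_pvoteA (w : state) : R :=
  (1 - phigh phL phH w) * bl + phigh phL phH w * bh.

Lemma sum_pvoteA_regular_profile w :
  \sum_n pvoteA phL phH regular_profile w n =
  #|[set n | friendly (v n)]|%:R +
  (N%:R - #|[set n | friendly (v n)]|%:R - #|[set n | unfriendly (v n)]|%:R) *
  contingent_pvoteA w.
Proof.
have cardE (P : pred 'I_N) : \sum_n ((P n)%:R : R) = #|[set n | P n]|%:R.
  rewrite -sum1_card natr_sum [RHS]big_mkcond.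
  by apply: eq_bigr => n _; rewrite inE; case: (P n).
rewrite -!cardE -[N in N%:R](card_ord N) -sum1_card natr_sum -!sumrB mulr_suml.
rewrite -big_split; apply: eq_bigr => n _ /=.
rewrite /pvoteA /regular_profile /contingent_pvoteA.
case fr: (friendly (v n)); first by rewrite friendly_unfriendlyF //=; ring.
by case: (unfriendly (v n)) => /=; ring.
Qed.

Lemma regular_profile_mean aF aU B w : valid_instance aF aU B v ->
  0 <= contingent_pvoteA w <= 1 ->
  let m := N%:R * (aF + (1 - aF - aU) * contingent_pvoteA w) in
  m - 1 <= \sum_n pvoteA phL phH regular_profile w n <= m + 1.
Proof.
move=> [_ [/floor_natr_bounds/andP[F_gt F_le]
  /floor_natr_bounds/andP[U_gt U_le]]] /andP[p0 p1].
rewrite sum_pvoteA_regular_profile /=.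
set F := (#|_|%:R : R) in F_gt F_le *; set U := (#|_|%:R : R) in U_gt U_le *.
apply/andP; split; nra.
Qed.

End RegularProfile.

Section Fidelity.
Variables (R : realType) (mu PL PH phL phH : R).
Variables (N : nat) (sigma : 'I_N -> R * R).

Lemma lambdaORE w :
  lambda mu phL phH sigma OR w = 1 - lambda mu phL phH sigma OA w.
Proof.
set p := pvoteA phL phH sigma w.
rewrite /lambda (_ : pset phL phH sigma w = bernoulli_set p) //.
rewrite -[X in X - _](sum_bernoulli_set p).
rewrite [X in X - _](bigID (fun S : {set 'I_N} => mu * N%:R <= #|S|%:R)) /=.
by rewrite addrAC subrr add0r; apply: eq_bigl => S; rewrite ltNge.
Qed.

Lemma fidelityE : PL + PH = 1 ->
  fidelity mu PL PH phL phH sigma =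
  1 - (PL * lambda mu phL phH sigma OA L + PH * lambda mu phL phH sigma OR H).
Proof.
move=> PLH; rewrite /fidelity (lambdaORE L) (lambdaORE H).
have -> : PH = 1 - PL by lra.
by ring.
Qed.

End Fidelity.

Section RegularProfileAsymptotics.
Local Open Scope classical_set_scope.
Variables (R : realType) (mu phL phH bl bh aF aU : R) (B : nat).
Variable v : forall N, 'I_N -> utility.
Arguments v : clear implicits.
Hypotheses (hv : forall N, valid_instance aF aU B (v N))
  (phL01 : 0 <= phL <= 1) (phH01 : 0 <= phH <= 1)
  (bl01 : 0 <= bl <= 1) (bh01 : 0 <= bh <= 1).

Let share w := aF + (1 - aF - aU) * contingent_pvoteA phL phH bl bh w.

Let contingent_pvoteA01 w : 0 <= contingent_pvoteA phL phH bl bh w <= 1.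
Proof. by apply: convex_comb01; case: w. Qed.

Let pvoteA01 (N : nat) w n :
  0 <= pvoteA phL phH (regular_profile bl bh (v N)) w n <= 1.
Proof.
have [/(_ n)[? ?] _] := regular_profileP (v N) bl01 bh01.
by apply: convex_comb01; case: w.
Qed.

Lemma lambdaOR_regular_cvg0 w : mu < share w ->
  (fun N => lambda mu phL phH (regular_profile bl bh (v N)) OR w) @ \oo --> 0.
Proof.
move=> mu_lt; apply: (@bernoulli_set_lt_cvg0 _ (share w - mu)) => // [|N].
  by rewrite subr_gt0.
have /andP[+ _] := regular_profile_mean (hv N) (contingent_pvoteA01 w).
rewrite -/(share w); lra.
Qed.

Lemma lambdaOA_regular_cvg0 w : share w < mu ->
  (fun N => lambda mu phL phH (regular_profile bl bh (v N)) OA w) @ \oo --> 0.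
Proof.
move=> lt_mu; apply: (@bernoulli_set_ge_cvg0 _ (mu - share w)) => // [|N].
  by rewrite subr_gt0.
have /andP[_ +] := regular_profile_mean (hv N) (contingent_pvoteA01 w).
rewrite -/(share w); lra.
Qed.

End RegularProfileAsymptotics.

Local Open Scope classical_set_scope.

Lemma fidelity_cvg1 (R : realType) (mu PL PH phL phH : R)
    (sigma : forall N, 'I_N -> R * R) : PL + PH = 1 ->
  (fun N => lambda mu phL phH (sigma N) OA L) @ \oo --> 0 ->
  (fun N => lambda mu phL phH (sigma N) OR H) @ \oo --> 0 ->
  (fun N => fidelity mu PL PH phL phH (sigma N)) @ \oo --> (1 : R).
Proof.
move=> PLH lossL lossH; under eq_fun do rewrite fidelityE //.
have := cvgB (cvg_cst (1 : R))
  (cvgD (cvgM (cvg_cst PL) lossL) (cvgM (cvg_cst PH) lossH)).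
by rewrite !mulr0 addr0 subr0; apply.
Qed.

Theorem theorem3 (R : realType) (mu PL PH phL phH aF aU aC : R) (B : nat)
  (hmu : 0 < mu < 1)
  (hPL : 0 < PL) (hPH : 0 < PH) (hP : PL + PH = 1)
  (hphL : 0 <= phL <= 1) (hphH : 0 <= phH <= 1) (hsig : phL < phH)
  (haF : 0 <= aF) (haU : 0 <= aU) (haC : 0 <= aC) (ha : aF + aU + aC = 1)
  (hFmu : aF < mu) (hUmu : aU < 1 - mu)
  (v : forall N : nat, 'I_N -> utility)
  (hv : forall N : nat, valid_instance aF aU B (v N)) :
  exists sigma : forall N : nat, 'I_N -> R * R,
    (forall N : nat, profile (sigma N) /\ regular (v N) (sigma N)) /\
    (fun N : nat => fidelity mu PL PH phL phH (sigma N)) @ \oo --> (1 : R).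
Proof.
have [[phL0 _] [_ phH1]] := (andP hphL, andP hphH).
have aC0 : 0 < 1 - aF - aU by lra.
pose t := (mu - aF) / (1 - aF - aU).
have t01 : 0 < t < 1.
  by apply/andP; split; rewrite /t ?ltr_pdivrMr ?ltr_pdivlMr //; lra.
have shareE q : aF + (1 - aF - aU) * q - mu = (1 - aF - aU) * (q - t).
  by rewrite /t; field; rewrite gt_eqF.
have [bl [bh [bl01 bh01 votesL votesH]]] :=
  separating_strategy phL0 hsig phH1 t01.
exists (fun N => regular_profile bl bh (v N)); split => [N|].
  exact: regular_profileP.
apply: fidelity_cvg1 hP _ _.
  apply: (lambdaOA_regular_cvg0 hv) => //.
  by rewrite -subr_lt0 shareE pmulr_rlt0 // subr_lt0.
apply: (lambdaOR_regular_cvg0 hv) => //.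
by rewrite -subr_gt0 shareE pmulr_rgt0 // subr_gt0.
Qed.
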